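(* Let $N=(P,T,F,M_0)$ be a Petri net with transition set $T=\{a,b,c\}$ (each transition being its own label, i.e. the labelling is injective). If the firing sequence $abbaac$ is enabled at $M_0$, then the firing sequence $aba$ is also enabled at $M_0$. Consequently, no injectively labelled Petri net has exactly the word $abbaac$ and its prefixes as its firing sequences (i.e. the word $abbaac$ is not synthesisable: $a$ cannot be prevented in the state reached after $ab$).
   Context: A Petri net is a tuple $N=(P,T,F,M_0)$ with finite disjoint sets $P$ (places) and $T$ (transitions), a flow function $F\colon (P\times T)\cup(T\times P)\to\mathbb{N}$, and an initial marking $M_0\colon P\to\mathbb{N}$. A transition $t$ is enabled at a marking $M$ if $M(p)\ge F(p,t)$ for all $p\in P$; firing it yields $M'$ with $M'(p)=M(p)-F(p,t)+F(t,p)$. A sequence $t_1t_2\cdots t_n$ is enabled (firable) at $M$ if $t_1$ is enabled at $M$, and successively each $t_{i+1}$ is enabled at the marking reached after firing $t_1\cdots t_i$. *)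

From mathcomp Require Import all_boot.
Set Implicit Arguments. Unset Strict Implicit. Unset Printing Implicit Defensive.

(* The transition set T = {a,b,c}; each transition is its own label. *)
Inductive trans := ta | tb | tc.

(* A Petri net N = (P, T, F, M0): P is a finite type of places, the flow
   function F is split into F(p,t) = pre p t and F(t,p) = post t p. *)
Section Net.
Variables (P : finType) (pre : P -> trans -> nat) (post : trans -> P -> nat).

Definition enabled (M : P -> nat) (t : trans) : Prop :=
  forall p : P, pre p t <= M p.

Definition fire (M : P -> nat) (t : trans) : P -> nat :=
  fun p => M p - pre p t + post t p.

Fixpoint firable (M : P -> nat) (w : seq trans) : Prop :=
  match w with
  | [::] => True
  | t :: w' => enabled M t /\ firable (fire M t) w'
  end.
End Net.

Definition is_prefix (w s : seq trans) : Prop := exists k, w = take k s.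

Definition abbaac : seq trans := [:: ta; tb; tb; ta; ta; tc].

(* Along an enabled firing sequence the marking changes by the sum of the
   effects of the fired transitions.  As [ab] and [ba] are permutations of each
   other, the marking reached after [ab] is the midpoint of [M0] and of the
   marking reached after [abba].  Enabledness of [a] is a conjunction of lower
   bounds on the marking, and [a] is enabled at both of these endpoints, hence
   also at the midpoint. *)
From mathcomp Require Import all_boot.
From mathcomp Require Import zify.
From HB Require Import structures.

Set Implicit Arguments.
Unset Strict Implicit.
Unset Printing Implicit Defensive.

Definition nat_of_trans (t : trans) : nat :=
  match t with ta => 0 | tb => 1 | tc => 2 end.

Definition trans_of_nat (n : nat) : trans :=
  match n with 0 => ta | 1 => tb | _ => tc end.

Lemma nat_of_transK : cancel nat_of_trans trans_of_nat.
Proof. by case. Qed.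

HB.instance Definition _ := Equality.copy trans (can_type nat_of_transK).

Section FiringSequences.
Variables (P : finType) (pre : P -> trans -> nat) (post : trans -> P -> nat).

Definition fireseq (M : P -> nat) (w : seq trans) : P -> nat :=
  foldl (fire pre post) M w.

Lemma firable_cat M u v :
  firable pre post M (u ++ v) <->
  firable pre post M u /\ firable pre post (fireseq M u) v.
Proof.
elim: u M => [|t u IHu] M /=; first by split=> [|[]].
by rewrite IHu; split=> [[? []]|[[]]].
Qed.

Lemma firable_rcons M u t :
  firable pre post M (rcons u t) <->
  firable pre post M u /\ enabled pre (fireseq M u) t.
Proof. by rewrite -cats1 firable_cat /=; split=> [[? []]|[? ?]]. Qed.

Lemma fireseq_state_equation M w :
  firable pre post M w -> forall p,
  fireseq M w p + \sum_(t <- w) pre p t = M p + \sum_(t <- w) post t p.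
Proof.
elim: w M => [|t w IHw] M /=; first by move=> _ p; rewrite !big_nil.
move=> [en_t /IHw IH] p; rewrite !big_cons /fireseq /= -/(fireseq _ w).
by move: (en_t p) (IH p); rewrite /fire; lia.
Qed.

Lemma fireseq_cat M u v : fireseq M (u ++ v) = fireseq (fireseq M u) v.
Proof. exact: foldl_cat. Qed.

Lemma enabled_fireseq_midpoint M u v t :
  perm_eq u v -> firable pre post M (u ++ v) ->
  enabled pre M t -> enabled pre (fireseq M (u ++ v)) t ->
  enabled pre (fireseq M u) t.
Proof.
move=> uv /firable_cat[fu fv] en0; rewrite fireseq_cat => en2 p.
have := fireseq_state_equation fu p; have := fireseq_state_equation fv p.
rewrite !(perm_big _ uv).
(* [perm_big] states its sums under another monoid instance; naming them lets [lia] identify the copies. *)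
set Spre := \sum_(_ <- v) pre p _; set Spost := \sum_(_ <- v) post _ p.
by move: (en0 p) (en2 p); lia.
Qed.

Lemma firable_aba_of_abbaac M :
  firable pre post M abbaac -> firable pre post M [:: ta; tb; ta].
Proof.
rewrite -[abbaac]/([:: ta; tb] ++ [:: tb; ta] ++ [:: ta; tc]) catA.
move=> /firable_cat[/[dup] fabba /firable_cat[fab _] [en_abba _]].
rewrite -[[:: ta; tb; ta]]/(rcons [:: ta; tb] ta) firable_rcons; split=> //.
by apply: enabled_fireseq_midpoint fabba _ en_abba => //; case: fab.
Qed.

End FiringSequences.

Theorem mainTheorem2 :
  (forall (P : finType) (pre : P -> trans -> nat) (post : trans -> P -> nat)
          (M0 : P -> nat),
      firable pre post M0 abbaac -> firable pre post M0 [:: ta; tb; ta])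
  /\
  (forall (P : finType) (pre : P -> trans -> nat) (post : trans -> P -> nat)
          (M0 : P -> nat),
      ~ (forall w : seq trans, firable pre post M0 w <-> is_prefix w abbaac)).
Proof.
split=> [|P pre post M0 lang]; first exact: firable_aba_of_abbaac.
have f_abbaac : firable pre post M0 abbaac by apply/lang; exists 6.
have [k] := proj1 (lang _) (firable_aba_of_abbaac f_abbaac).
by case: k => [|[|[|[|k]]]].
Qed.
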